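(* Let $\mathcal{D}$ be an abstract system of proof notations and $s\in\mathbb{N}$. If $\mathcal{D}$ is $s$-bounded, $d\in\mathbb{E}(\mathcal{D})$ and $d\to d'$ (in $\mathbb{E}(\mathcal{D})$), then $\vartheta_d(s)\ge\vartheta_{d'}(s)$.
   Context: An abstract system of proof notations is a set $\mathcal{D}$ with functions $|\cdot|,o(\cdot)\colon\mathcal{D}\to\mathbb{N}\setminus\{0\}$ (size and height) and a relation $\to\subseteq\mathcal{D}\times\mathcal{D}$ such that $d\to d'$ implies $o(d')<o(d)$. The cut-elimination closure $\mathbb{E}(\mathcal{D})$ is the abstract system of formal terms inductively generated by: every $d\in\mathcal{D}$ is in $\mathbb{E}(\mathcal{D})$ (with size and height inherited); if $d,e\in\mathbb{E}(\mathcal{D})$ then $\mathsf{I}d,\ \mathsf{R}de,\ \mathsf{E}d\in\mathbb{E}(\mathcal{D})$ ($\mathsf I,\mathsf R,\mathsf E$ new symbols), with $|\mathsf Id|=|d|+1$, $|\mathsf Rde|=|d|+|e|+1$, $|\mathsf Ed|=|d|+1$, $o(\mathsf Id)=o(d)$, $o(\mathsf Rde)=o(d)+o(e)$, $o(\mathsf Ed)=2^{o(d)}-1$. The relation $\to$ on $\mathbb{E}(\mathcal{D})$ is inductively generated by: $d\to d'$ in $\mathcal{D}$ implies $d\to d'$; $d\to d'$ implies $\mathsf Id\to\mathsf Id'$; $e\to e'$ implies $\mathsf Rde\to\mathsf Rde'$; $d\to d'$ implies $\mathsf Ed\to\mathsf Ed'$; $\mathsf Rde\to\mathsf Id$ always;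 and $d\to d'$ together with $d\to d''$ implies $\mathsf Ed\to\mathsf R(\mathsf Ed')(\mathsf Ed'')$. The size function $\vartheta_d\colon\mathbb{N}\to\mathbb{N}$ for $d\in\mathbb{E}(\mathcal{D})$ is defined by recursion: $\vartheta_d(s)=s$ for $d\in\mathcal{D}$; $\vartheta_{\mathsf Id}(s)=\vartheta_d(s)+1$; $\vartheta_{\mathsf Rde}(s)=\max\{|d|+1+\vartheta_e(s),\ \vartheta_d(s)+1\}$; $\vartheta_{\mathsf Ed}(s)=o(d)\cdot(\vartheta_d(s)+2)$. $\mathcal{D}$ is called $s$-bounded if $|d|\le s$ for all $d\in\mathcal{D}$. *)

From Stdlib Require Import Arith Lia.

Record ASPN := {
  carrier :> Type;
  asize : carrier -> nat;
  aheight : carrier -> nat;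
  astep : carrier -> carrier -> Prop;
  asize_pos : forall d, 0 < asize d;
  aheight_pos : forall d, 0 < aheight d;
  astep_height : forall d d', astep d d' -> aheight d' < aheight d
}.

Inductive Eterm (D : ASPN) : Type :=
| Ebase : D -> Eterm D
| EI : Eterm D -> Eterm D
| ER : Eterm D -> Eterm D -> Eterm D
| EE : Eterm D -> Eterm D.

Arguments Ebase {D} _.
Arguments EI {D} _.
Arguments ER {D} _ _.
Arguments EE {D} _.

Fixpoint Esize {D : ASPN} (t : Eterm D) : nat :=
  match t with
  | Ebase d => asize D d
  | EI d => Esize d + 1
  | ER d e => Esize d + Esize e + 1
  | EE d => Esize d + 1
  end.

Fixpoint Eheight {D : ASPN} (t : Eterm D) : nat :=
  match t with
  | Ebase d => aheight D d
  | EI d => Eheight d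
  | ER d e => Eheight d + Eheight e
  | EE d => 2 ^ Eheight d - 1
  end.

Inductive Estep {D : ASPN} : Eterm D -> Eterm D -> Prop :=
| Estep_base : forall d d', astep D d d' -> Estep (Ebase d) (Ebase d')
| Estep_I : forall d d', Estep d d' -> Estep (EI d) (EI d')
| Estep_R : forall d e e', Estep e e' -> Estep (ER d e) (ER d e')
| Estep_E : forall d d', Estep d d' -> Estep (EE d) (EE d')
| Estep_RI : forall d e, Estep (ER d e) (EI d)
| Estep_ER : forall d d' d'', Estep d d' -> Estep d d'' ->
    Estep (EE d) (ER (EE d') (EE d'')).

Fixpoint theta {D : ASPN} (t : Eterm D) (s : nat) : nat :=
  match t with
  | Ebase _ => s
  | EI d => theta d s + 1
  | ER d e => Nat.max (Esize d + 1 + theta e s) (theta d s + 1)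
  | EE d => Eheight d * (theta d s + 2)
  end.

Definition s_bounded (D : ASPN) (s : nat) : Prop :=
  forall d : D, asize D d <= s.

(* The only non-structural reduction is
   E d -> R (E d') (E d''): there o(d') and o(d'') are at most o(d) - 1, so
   theta of each new E-term is at most (o(d) - 1) (theta_d(s) + 2), and the
   remaining summand |E d'| + 1 <= theta_d(s) + 2 fits into the one copy of
   theta_d(s) + 2 left over in o(d) (theta_d(s) + 2). *)
From Stdlib Require Import Arith Lia.

Lemma pow2_add_le (m n k : nat) : m < k -> n < k -> 2 ^ m + 2 ^ n <= 2 ^ k.
Proof.
  intros Hm Hn.
  replace k with (S (k - 1)) by lia.
  rewrite Nat.pow_succ_r'.
  assert (2 ^ m <= 2 ^ (k - 1)) by (apply Nat.pow_le_mono_r; lia).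
  assert (2 ^ n <= 2 ^ (k - 1)) by (apply Nat.pow_le_mono_r; lia).
  lia.
Qed.

Lemma Eheight_pos {D : ASPN} (t : Eterm D) : 0 < Eheight t.
Proof.
  induction t; simpl.
  - apply aheight_pos.
  - lia.
  - lia.
  - assert (2 ^ 1 <= 2 ^ Eheight t) by (apply Nat.pow_le_mono_r; lia).
    simpl in *; lia.
Qed.

Lemma Estep_Eheight_lt {D : ASPN} (d d' : Eterm D) :
  Estep d d' -> Eheight d' < Eheight d.
Proof.
  induction 1; simpl.
  - now apply astep_height.
  - lia.
  - lia.
  - assert (2 ^ Eheight d' < 2 ^ Eheight d) by (apply Nat.pow_lt_mono_r; lia).
    pose proof (Nat.pow_nonzero 2 (Eheight d') ltac:(lia)).
    lia.
  - pose proof (Eheight_pos e); lia.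
  - pose proof (pow2_add_le _ _ _ IHEstep1 IHEstep2).
    pose proof (Nat.pow_nonzero 2 (Eheight d') ltac:(lia)).
    pose proof (Nat.pow_nonzero 2 (Eheight d'') ltac:(lia)).
    lia.
Qed.

Lemma Esize_le_theta {D : ASPN} (s : nat) (t : Eterm D) :
  s_bounded D s -> Esize t <= theta t s.
Proof.
  intros Hs; induction t; simpl.
  - apply Hs.
  - lia.
  - lia.
  - pose proof (Eheight_pos t); nia.
Qed.

Lemma ER_split_bound (o o' o'' T T' T'' k : nat) :
  o' < o -> o'' < o -> T' <= T -> T'' <= T -> k <= T ->
  Nat.max (k + 2 + o'' * (T'' + 2)) (o' * (T' + 2) + 1) <= o * (T + 2).
Proof.
  intros Ho' Ho'' HT' HT'' Hk.
  destruct o as [|p]; [lia|].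
  assert (o' * (T' + 2) <= p * (T + 2)) by (apply Nat.mul_le_mono; lia).
  assert (o'' * (T'' + 2) <= p * (T + 2)) by (apply Nat.mul_le_mono; lia).
  simpl; lia.
Qed.

Theorem mainTheorem5 (D : ASPN) (s : nat) (d d' : Eterm D) :
  s_bounded D s -> Estep d d' -> theta d' s <= theta d s.
Proof.
  intros Hs H; induction H; simpl.
  - lia.
  - lia.
  - lia.
  - pose proof (Estep_Eheight_lt _ _ H).
    apply Nat.mul_le_mono; lia.
  - lia.
  - replace (Esize d' + 1 + 1) with (Esize d' + 2) by lia.
    apply ER_split_bound; try apply Estep_Eheight_lt; auto.
    pose proof (Esize_le_theta s d' Hs); lia.
Qed.
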